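(* Let $(X,d)$ be a nonempty, separable, ultrametric metric space which is spherically dense. Then: (a) for every $c_0\in X$, all real numbers $0\le r_1<r_0$, and every $z\in X$, there exists $c_1\in X$ such that $B(c_1,r_1)\subseteq B(c_0,r_0)$ and $z\notin B(c_1,r_1)$; (b) $X$ is not spherically complete.
   Context: $B(c,r)=\{x: d(x,c)\le r\}$ is the closed ball, $r\ge0$. A metric space is spherically dense if $\operatorname{diam}(B(c,r))=r$ for every $c\in X$ and every $r\ge 0$, where $\operatorname{diam}(A)=\sup_{x,y\in A}d(x,y)$. Ultrametric: $d(x,z)\le\max(d(x,y),d(y,z))$. Separable: has a countable dense subset. Spherically complete: for all sequences $(c_i)$ in $X$, $(r_i)$ in $\mathbb R_{\ge0}$ with $B(c_0,r_0)\supseteq B(c_1,r_1)\supseteq\cdots$, $\bigcap_i B(c_i,r_i)\ne\emptyset$. *)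

From Stdlib Require Import Reals.
Open Scope R_scope.

Definition is_metric {X : Type} (d : X -> X -> R) : Prop :=
  (forall x y, 0 <= d x y) /\
  (forall x y, d x y = 0 <-> x = y) /\
  (forall x y, d x y = d y x) /\
  (forall x y z, d x z <= d x y + d y z).

Definition ultrametric {X : Type} (d : X -> X -> R) : Prop :=
  forall x y z, d x z <= Rmax (d x y) (d y z).

Definition ball {X : Type} (d : X -> X -> R) (c : X) (r : R) : X -> Prop :=
  fun x => d x c <= r.

Definition diam_is {X : Type} (d : X -> X -> R) (A : X -> Prop) (t : R) : Prop :=
  is_lub (fun s => exists x y, A x /\ A y /\ s = d x y) t.

Definition spherically_dense {X : Type} (d : X -> X -> R) : Prop :=
  forall (c : X) (r : R), 0 <= r -> diam_is d (ball d c r) r.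

Definition separable {X : Type} (d : X -> X -> R) : Prop :=
  exists D : X -> Prop,
    (exists f : nat -> X, forall x, D x -> exists n, f n = x) /\
    (forall x eps, 0 < eps -> exists y, D y /\ d x y < eps).

Definition spherically_complete {X : Type} (d : X -> X -> R) : Prop :=
  forall (c : nat -> X) (r : nat -> R),
    (forall i, 0 <= r i) ->
    (forall i x, ball d (c (S i)) (r (S i)) x -> ball d (c i) (r i) x) ->
    exists x, forall i, ball d (c i) (r i) x.

(** In an ultrametric space every point of a ball is a centre of it, so any
    smaller ball centred in [B(c0,r0)] lies in [B(c0,r0)].  Spherical density
    gives two points of [B(c0,r0)] at distance [> r1]; [z] cannot be within [r1]
    of both, so one of them is a centre for (a).  For (b), enumerate a countable
    dense set as [f 0, f 1, ...] and use (a) to build nested balls of radii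
    [1 + 1/(n+1)] with the [n]-th ball avoiding [f n].  A point in the
    intersection would have some [f m] within distance [1], hence in every ball,
    contradicting the choice of the [m+1]-st ball. *)

From Stdlib Require Import Reals Lra Lia Classical ClassicalEpsilon.
Open Scope R_scope.

Section Ultrametric.

Variables (X : Type) (d : X -> X -> R).
Hypothesis U : ultrametric d.

Lemma ultrametric_le x y z a : d x y <= a -> d y z <= a -> d x z <= a.
Proof.
  intros Hxy Hyz. apply Rle_trans with (1 := U x y z).
  unfold Rmax; destruct Rle_dec; assumption.
Qed.

Lemma ball_sub_of_center_in_ball c0 c1 r0 r1 :
  ball d c0 r0 c1 -> r1 <= r0 ->
  forall x, ball d c1 r1 x -> ball d c0 r0 x.
Proof.
  unfold ball; intros Hc1 Hr x Hx. apply (ultrametric_le x c1 c0); lra.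
Qed.

Hypothesis Hsym : forall x y, d x y = d y x.

Lemma ultrametric_dist_le_of_common_point z x y r :
  d z x <= r -> d z y <= r -> d x y <= r.
Proof. intros Hx Hy. apply (ultrametric_le x z y); [rewrite Hsym |]; assumption. Qed.

End Ultrametric.

Lemma diam_is_gt (X : Type) (d : X -> X -> R) (A : X -> Prop) t s :
  diam_is d A t -> s < t -> exists x y, A x /\ A y /\ s < d x y.
Proof.
  intros [_ Hlub] Hst. apply NNPP; intro Hnone.
  enough (t <= s) by lra.
  apply Hlub; intros u (x & y & Hx & Hy & ->).
  apply Rnot_lt_le; intro Hlt. apply Hnone; exists x, y; auto.
Qed.

Lemma ball_avoiding_point (X : Type) (d : X -> X -> R) :
  is_metric d -> ultrametric d -> spherically_dense d ->
  forall (c0 : X) (r0 r1 : R) (z : X), 0 <= r1 -> r1 < r0 ->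
    exists c1 : X,
      (forall x, ball d c1 r1 x -> ball d c0 r0 x) /\ ~ ball d c1 r1 z.
Proof.
  intros (_ & _ & Hsym & _) U SD c0 r0 r1 z Hr1 Hr.
  destruct (diam_is_gt _ _ _ _ r1 (SD c0 r0 ltac:(lra)) Hr)
    as (x & y & Hx & Hy & Hxy).
  destruct (Rle_dec (d z x) r1) as [Hzx | Hzx].
  - exists y; split; [apply (ball_sub_of_center_in_ball _ _ U); auto; lra |].
    unfold ball; intro Hzy.
    enough (d x y <= r1) by lra.
    apply (ultrametric_dist_le_of_common_point _ _ U Hsym z); assumption.
  - exists x; split; [apply (ball_sub_of_center_in_ball _ _ U); auto; lra |].
    exact Hzx.
Qed.

Lemma nested_balls_avoiding (X : Type) (d : X -> X -> R) (r : nat -> R)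
    (f : nat -> X) (x0 : X) :
  (forall c n, exists c',
     (forall x, ball d c' (r (S n)) x -> ball d c (r n) x) /\
     ~ ball d c' (r (S n)) (f n)) ->
  exists c : nat -> X,
    (forall n x, ball d (c (S n)) (r (S n)) x -> ball d (c n) (r n) x) /\
    (forall n, ~ ball d (c (S n)) (r (S n)) (f n)).
Proof.
  intros Hstep.
  pose (next c n := proj1_sig (constructive_indefinite_description _ (Hstep c n))).
  assert (Hnext : forall c n,
     (forall x, ball d (next c n) (r (S n)) x -> ball d c (r n) x) /\
     ~ ball d (next c n) (r (S n)) (f n)).
  { intros c n; exact (proj2_sig (constructive_indefinite_description _ (Hstep c n))). }
  exists (fix c n := match n with O => x0 | S m => next (c m) m end).
  split; intro n; apply Hnext.
Qed.

Definition radius (n : nat) : R := 1 + / INR (S n).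

Lemma radius_gt_1 n : 1 < radius n.
Proof.
  unfold radius. enough (0 < / INR (S n)) by lra.
  apply Rinv_0_lt_compat, lt_0_INR; lia.
Qed.

Lemma radius_decreasing n : radius (S n) < radius n.
Proof.
  unfold radius. apply Rplus_lt_compat_l, Rinv_lt_contravar.
  - apply Rmult_lt_0_compat; apply lt_0_INR; lia.
  - apply lt_INR; lia.
Qed.

Theorem theorem3p2 (X : Type) (d : X -> X -> R) :
  is_metric d -> inhabited X -> separable d -> ultrametric d ->
  spherically_dense d ->
  (forall (c0 : X) (r0 r1 : R) (z : X), 0 <= r1 -> r1 < r0 ->
     exists c1 : X,
       (forall x, ball d c1 r1 x -> ball d c0 r0 x) /\ ~ ball d c1 r1 z) /\
  ~ spherically_complete d.
Proof.
  intros M [x0] [D [[f Hf] Hdense]] U SD.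
  pose proof (ball_avoiding_point X d M U SD) as Havoid.
  split; [exact Havoid | intro SC].
  destruct M as (_ & _ & Hsym & _).
  destruct (nested_balls_avoiding X d radius f x0) as (c & Hnested & Hout).
  { intros c n; apply Havoid; [pose proof (radius_gt_1 (S n)); lra | apply radius_decreasing]. }
  destruct (SC c radius) as [x Hx];
    [intro i; pose proof (radius_gt_1 i); lra | exact Hnested |].
  destruct (Hdense x 1 ltac:(lra)) as (y & Dy & Hxy).
  destruct (Hf y Dy) as [m <-].
  apply (Hout m); unfold ball.
  apply (ultrametric_le X d U (f m) x).
  - rewrite Hsym; pose proof (radius_gt_1 (S m)); lra.
  - apply Hx.
Qed.
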